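(* Let $IS\in\{\Box,\blacksquare\}^2$ and let $\tau$ be a correct compositional translation from $\mathrm{SYNCSIMPLE}$ into $\mathrm{LOCKSIMPLE}_{2,IS}$ of blocking type $(P_1,P_2)$. Then both $\tau(!)$ and $\tau(?)$ have a nonempty suffix in $\{T_1,T_2\}^+$.
   Context: $\mathrm{SYNCSIMPLE}$: subprocesses $\mathcal{U} ::= \checkmark \mid 0 \mid\, !\mathcal{U} \mid\, ?\mathcal{U}$; processes are finite parallel compositions ($\mid$ associative, commutative, $0$ a unit). Reduction: $!\mathcal{U}_1\mid ?\mathcal{U}_2\mid \mathcal{P}\to \mathcal{U}_1\mid\mathcal{U}_2\mid\mathcal{P}$. Successful: of form $\checkmark\mid\mathcal{P}$; may-convergent: reduces to a successful process; must-convergent: every reachable process is may-convergent. $\mathrm{LOCKSIMPLE}_{k,IS}$ ($IS\in\{\Box,\blacksquare\}^k$, $\Box$ empty, $\blacksquare$ full): subprocesses are words over $\{P_1,T_1,\dots,P_k,T_k\}$ followed by $0$ or $\checkmark$; states $(\mathcal{P},C)$ reduce by $(P_i\mathcal{U}\mid\mathcal{P},C)\to(\mathcal{U}\mid\mathcal{P},C[C_i:=\blacksquare])$ only if $C_i=\Box$, and $(T_i\mathcal{U}\mid\mathcal{P},C)\to(\mathcal{U}\mid\mathcal{P},C[C_i:=\Box])$ always. Success = process contains $\checkmark$; a process $\mathcal{P}$ is may/must-convergent iff the state $(\mathcal{P},IS)$ is. A compositional translation $\tau$ is given by words $\tau(!),\tau(?)$ with $\tau(0)=0$, $\tau(\checkmark)=\checkmark$,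 $\tau(!\mathcal{U})=\tau(!)\tau(\mathcal{U})$, $\tau(?\mathcal{U})=\tau(?)\tau(\mathcal{U})$, $\tau$ commuting with $\mid$; correct = preserves and reflects may- and must-convergence. Blocking type of a word $S$: execute $S$ alone from $IS$; if it gets stuck at an occurrence of $P_i$ that is the first symbol from $\{P_i,T_i\}$ in $S$ the type is $P_i$, if stuck at a later occurrence of $P_i$ the type is $P_iP_i$; $\tau$ has blocking type $(W_1,W_2)$ if $\tau(!)$ has type $W_1$ and $\tau(?)$ type $W_2$. $X^+$ denotes nonempty finite words over $X$. *)

From Stdlib Require Import List Permutation.
Import ListNotations.

Inductive ssub : Type :=
| STick : ssub
| SZero : ssub
| SSnd : ssub -> ssub
| SRcv : ssub -> ssub.

(* processes: finite parallel compositions, as lists up to permutation *)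
Definition sproc := list ssub.

Definition sstep (P P' : sproc) : Prop :=
  exists U1 U2 R, Permutation P (SSnd U1 :: SRcv U2 :: R) /\ P' = U1 :: U2 :: R.

Inductive ssteps : sproc -> sproc -> Prop :=
| ssteps_refl P : ssteps P P
| ssteps_step P P' P'' : sstep P P' -> ssteps P' P'' -> ssteps P P''.

Definition ssuccess (P : sproc) : Prop := In STick P.
Definition smay (P : sproc) : Prop := exists P', ssteps P P' /\ ssuccess P'.
Definition smust (P : sproc) : Prop := forall P', ssteps P P' -> smay P'.

Inductive lockid : Type := L1 | L2.
Definition lockid_eq_dec (i j : lockid) : {i = j} + {i <> j}.
Proof. decide equality. Defined.

Inductive cell : Type := Empty | Full.   (* Box / blacksquare *)
Definition cells := lockid -> cell.
Definition upd (C : cells) (i : lockid) (c : cell) : cells :=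
  fun j => if lockid_eq_dec i j then c else C j.

Inductive lsym : Type := P (i : lockid) | T (i : lockid).

Inductive lsub : Type :=
| LTick : lsub
| LZero : lsub
| LP : lockid -> lsub -> lsub
| LT : lockid -> lsub -> lsub.

Definition lproc := list lsub.

Definition lstep (S S' : lproc * cells) : Prop :=
  let (Pr, C) := S in
  (exists i U R, Permutation Pr (LP i U :: R) /\ C i = Empty /\
                 S' = (U :: R, upd C i Full)) \/
  (exists i U R, Permutation Pr (LT i U :: R) /\
                 S' = (U :: R, upd C i Empty)).

Inductive lsteps : lproc * cells -> lproc * cells -> Prop :=
| lsteps_refl S : lsteps S S
| lsteps_step S S' S'' : lstep S S' -> lsteps S' S'' -> lsteps S S''.

Definition lsuccess (S : lproc * cells) : Prop := In LTick (fst S).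
Definition lmay (S : lproc * cells) : Prop := exists S', lsteps S S' /\ lsuccess S'.
Definition lmust (S : lproc * cells) : Prop := forall S', lsteps S S' -> lmay S'.

Definition lmay_proc (IS : cells) (Pr : lproc) : Prop := lmay (Pr, IS).
Definition lmust_proc (IS : cells) (Pr : lproc) : Prop := lmust (Pr, IS).

Definition prefix_sym (s : lsym) (u : lsub) : lsub :=
  match s with P i => LP i u | T i => LT i u end.
Definition prefix (w : list lsym) (u : lsub) : lsub := fold_right prefix_sym u w.

(* translation determined by the words tau(!) = ws and tau(?) = wr *)
Fixpoint tr_sub (ws wr : list lsym) (U : ssub) : lsub :=
  match U with
  | STick => LTick
  | SZero => LZero
  | SSnd U' => prefix ws (tr_sub ws wr U')
  | SRcv U' => prefix wr (tr_sub ws wr U')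
  end.
Definition tr_proc (ws wr : list lsym) (Pr : sproc) : lproc := map (tr_sub ws wr) Pr.

Definition correct_translation (IS : cells) (ws wr : list lsym) : Prop :=
  forall Pr : sproc,
    (smay Pr <-> lmay_proc IS (tr_proc ws wr Pr)) /\
    (smust Pr <-> lmust_proc IS (tr_proc ws wr Pr)).

(* executing a word alone, sequentially; None = gets stuck *)
Fixpoint exec (w : list lsym) (C : cells) : option cells :=
  match w with
  | [] => Some C
  | P i :: w' => match C i with Empty => exec w' (upd C i Full) | Full => None end
  | T i :: w' => exec w' (upd C i Empty)
  end.

Definition mentions (i : lockid) (s : lsym) : Prop :=
  match s with P j => j = i | T j => j = i end.

Definition blocking_type_P (IS : cells) (w : list lsym) (i : lockid) : Prop :=
  exists w1 w2 C, w = w1 ++ P i :: w2 /\ exec w1 IS = Some C /\ C i = Full /\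
                  Forall (fun s => ~ mentions i s) w1.

Definition is_T (s : lsym) : Prop := match s with T _ => True | P _ => False end.

Definition has_T_suffix (w : list lsym) : Prop :=
  exists w1 w2, w = w1 ++ w2 /\ w2 <> [] /\ Forall is_T w2.

(** Each word blocks on the first occurrence of its lock, so both locks start
    full.  Suppose a translated word [x] ended with [P j].  A successful run of
    [x ✓ ∥ y 0] (the translation of a may-convergent process) passes through a
    state where only that last [P j] of [x] is left.  Lengthen the partner to
    [y ++ e] and let it run alone from there.  If it terminates, then
    [(y ++ e) ✓ ∥ x 0] succeeds although its source process is not
    may-convergent.  If it
    gets stuck at some [P k] while [P j] is also blocked, the state is a
    deadlock.  Otherwise firing [P j] fills both locks again, which is the
    initial configuration, so the other translated word [f] appended to [x]
    gets stuck on its own lock, which must be [k]: a deadlock again.  Either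
    deadlock contradicts the must-convergence of a suitable source process. *)

From Stdlib Require Import List Permutation Relation_Operators FunctionalExtensionality.
Import ListNotations.

Lemma upd_same C i c : upd C i c i = c.
Proof. unfold upd. destruct (lockid_eq_dec i i); congruence. Qed.

Lemma upd_other C i c k : i <> k -> upd C i c k = C k.
Proof. unfold upd. destruct (lockid_eq_dec i k); congruence. Qed.

Lemma lockid_other (j k : lockid) : j <> k -> forall i, i = j \/ i = k.
Proof. destruct j, k; intros Hjk []; intuition congruence. Qed.

Lemma prefix_app a b k : prefix (a ++ b) k = prefix a (prefix b k).
Proof. apply fold_right_app. Qed.

Inductive sym_step : lsym -> cells -> cells -> Prop :=
| sym_step_P i C : C i = Empty -> sym_step (P i) C (upd C i Full)
| sym_step_T i C : sym_step (T i) C (upd C i Empty).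

Lemma lstep_iff Pr C S' :
  lstep (Pr, C) S' <->
  exists s u R C', Permutation Pr (prefix_sym s u :: R) /\ sym_step s C C' /\ S' = (u :: R, C').
Proof.
  split.
  - intros [(i & u & R & Hp & Hi & ->) | (i & u & R & Hp & ->)].
    + exists (P i), u, R, (upd C i Full). repeat split; auto. constructor; assumption.
    + exists (T i), u, R, (upd C i Empty). repeat split; auto. constructor.
  - intros (s & u & R & C' & Hp & Hs & ->).
    destruct Hs; [left | right]; eauto 6.
Qed.

(** * Two threads running words *)

(* The left word is followed by [✓] and the right one by [0]. *)
Definition wstate : Type := (list lsym * list lsym * cells)%type.

Inductive istep : wstate -> wstate -> Prop :=
| istep_left s a b C C' : sym_step s C C' -> istep (s :: a, b, C) (a, b, C')
| istep_right s a b C C' : sym_step s C C' -> istep (a, s :: b, C) (a, b, C').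

Definition isteps : wstate -> wstate -> Prop := clos_refl_trans_1n wstate istep.

Lemma isteps_trans s1 s2 s3 : isteps s1 s2 -> isteps s2 s3 -> isteps s1 s3.
Proof.
  intros H12 H23. induction H12 as [|x y z Hxy _ IH]; [assumption|].
  econstructor; [exact Hxy | exact (IH H23)].
Qed.

Lemma isteps_map (g : wstate -> wstate) s s' :
  (forall t t', istep t t' -> istep (g t) (g t')) -> isteps s s' -> isteps (g s) (g s').
Proof.
  intros Hg H. induction H; [apply rt1n_refl | eapply rt1n_trans; eauto].
Qed.

Lemma isteps_swap a b C a' b' C' :
  isteps (a, b, C) (a', b', C') -> isteps (b, a, C) (b', a', C').
Proof.
  apply (isteps_map (fun '(a, b, C) => (b, a, C))).
  intros t t' H. destruct H; constructor; assumption.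
Qed.

Lemma isteps_app_left f a b C a' b' C' :
  isteps (a, b, C) (a', b', C') -> isteps (a ++ f, b, C) (a' ++ f, b', C').
Proof.
  apply (isteps_map (fun '(a, b, C) => (a ++ f, b, C))).
  intros t t' H. destruct H; constructor; assumption.
Qed.

Lemma isteps_app_right e a b C a' b' C' :
  isteps (a, b, C) (a', b', C') -> isteps (a, b ++ e, C) (a', b' ++ e, C').
Proof.
  apply (isteps_map (fun '(a, b, C) => (a, b ++ e, C))).
  intros t t' H. destruct H; constructor; assumption.
Qed.

Lemma isteps_exec_right a w w' C C' :
  exec w C = Some C' -> isteps (a, w ++ w', C) (a, w', C').
Proof.
  revert C. induction w as [|[i|i] w IH]; intros C Hw; cbn in Hw.
  - injection Hw as <-. apply rt1n_refl.
  - destruct (C i) eqn:Hi; [|discriminate].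
    eapply rt1n_trans; [constructor; constructor; exact Hi | exact (IH _ Hw)].
  - eapply rt1n_trans; [constructor; constructor | exact (IH _ Hw)].
Qed.

Lemma isteps_exec_left b w w' C C' :
  exec w C = Some C' -> isteps (w ++ w', b, C) (w', b, C').
Proof. intros Hw. apply isteps_swap, isteps_exec_right, Hw. Qed.

Lemma isteps_through_suffix a1 a2 b C b' C' :
  isteps (a1 ++ a2, b, C) ([], b', C') ->
  exists b0 C0, isteps (a1 ++ a2, b, C) (a2, b0, C0).
Proof.
  intros H. remember (a1 ++ a2, b, C) as s eqn:Hs. remember ([], b', C') as s' eqn:Hs'.
  revert a1 b C Hs. induction H as [s | s s1 s' Hstep Hrest IH]; intros a1 b C ->.
  - injection Hs' as Ha _ _. apply app_eq_nil in Ha as [-> ->].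
    exists b, C. apply rt1n_refl.
  - destruct a1 as [|x a1]; [exists b, C; apply rt1n_refl|].
    inversion Hstep; subst.
    + destruct (IH eq_refl a1 _ _ eq_refl) as (b0 & C0 & Hrun).
      exists b0, C0. econstructor; eassumption.
    + destruct (IH eq_refl (x :: a1) _ _ eq_refl) as (b1 & C1 & Hrun).
      exists b1, C1. econstructor; eassumption.
Qed.

Definition blocked (C : cells) (w : list lsym) : Prop :=
  exists i r, w = P i :: r /\ C i = Full.

Definition deadlocked (s : wstate) : Prop :=
  let '(a, b, C) := s in blocked C a /\ (b = [] \/ blocked C b).

Definition stuck_at (C : cells) (w : list lsym) (i : lockid) : Prop :=
  exists w1 w2 C1, w = w1 ++ P i :: w2 /\ exec w1 C = Some C1 /\ C1 i = Full.

Lemma exec_some_or_stuck w C :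
  (exists C', exec w C = Some C') \/ exists k, stuck_at C w k.
Proof.
  revert C. induction w as [|[i|i] w IH]; intros C; [left; exists C; reflexivity| |].
  - destruct (C i) eqn:Hi; [|right; exists i, [], w, C; auto].
    destruct (IH (upd C i Full)) as [(C' & Hw) | (k & w1 & w2 & C1 & -> & Hw1 & Hk)].
    + left. exists C'. cbn. rewrite Hi. exact Hw.
    + right. exists k, (P i :: w1), w2, C1. cbn. rewrite Hi. auto.
  - destruct (IH (upd C i Empty)) as [(C' & Hw) | (k & w1 & w2 & C1 & -> & Hw1 & Hk)].
    + left. exists C'. exact Hw.
    + right. exists k, (T i :: w1), w2, C1. auto.
Qed.

Lemma exec_untouched i w C C' :
  Forall (fun s => ~ mentions i s) w -> exec w C = Some C' -> C' i = C i.
Proof.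
  revert C. induction w as [|s w IH]; intros C Hw Hexec; cbn in Hexec.
  - congruence.
  - inversion Hw as [|? ? Hs Hrest]; subst.
    destruct s as [k|k]; cbn in Hs; [destruct (C k); [|discriminate]|];
      rewrite (IH _ Hrest Hexec); apply upd_other; assumption.
Qed.

Lemma blocking_type_P_initial_full IS w i : blocking_type_P IS w i -> IS i = Full.
Proof.
  intros (w1 & w2 & C & _ & Hexec & Hi & Hw1).
  rewrite <- (exec_untouched _ _ _ _ Hw1 Hexec). exact Hi.
Qed.

Lemma blocking_type_P_stuck_at IS w i : blocking_type_P IS w i -> stuck_at IS w i.
Proof. intros (w1 & w2 & C & ? & ? & ? & _). exists w1, w2, C. auto. Qed.

Lemma stuck_at_nonempty C w i : stuck_at C w i -> w <> [].
Proof. intros (w1 & w2 & C1 & -> & _). destruct w1; discriminate. Qed.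

Definition may_finish (a b : list lsym) (C : cells) : Prop :=
  exists b' C', isteps (a, b, C) ([], b', C').

Definition deadlock_free (a b : list lsym) (C : cells) : Prop :=
  forall s, isteps (a, b, C) s -> ~ deadlocked s.

Lemma deadlocked_no_istep s s' : deadlocked s -> ~ istep s s'.
Proof.
  destruct s as [[a b] C]. intros [(i & r & -> & Hi) Hb] Hstep.
  inversion Hstep as [sy a' b' C0 C' Hs | sy a' b' C0 C' Hs]; subst.
  - inversion Hs; congruence.
  - destruct Hb as [Hb | (k & r' & Hb & Hk)]; [discriminate|].
    injection Hb as -> ->. inversion Hs; congruence.
Qed.

Lemma deadlocked_not_may_finish a b C : deadlocked (a, b, C) -> ~ may_finish a b C.
Proof.
  intros Hdead (b' & C' & Hrun).
  inversion Hrun as [Heq | s1 s Hstep]; subst.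
  - destruct Hdead as [(i & r & Hr & _) _]. discriminate.
  - exact (deadlocked_no_istep _ _ Hdead Hstep).
Qed.

(** * Two threads as a LOCKSIMPLE process *)

Definition encodes (s : wstate) (S : lproc * cells) : Prop :=
  let '(a, b, C) := s in
  let '(Pr, D) := S in Permutation Pr [prefix a LTick; prefix b LZero] /\ D = C.

Lemma Permutation_cons_pair_inv {A} (z x y : A) R :
  Permutation (z :: R) [x; y] -> (z = x /\ R = [y]) \/ (z = y /\ R = [x]).
Proof.
  intros H. destruct R as [|r [|r' R]];
    try (apply Permutation_length in H; discriminate).
  apply Permutation_length_2_inv in H as [H | H]; injection H as -> ->; auto.
Qed.

Lemma prefix_eq_prefix_sym a k s v :
  k = LTick \/ k = LZero -> prefix a k = prefix_sym s v ->
  exists a', a = s :: a' /\ v = prefix a' k.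
Proof.
  intros Hk H. destruct a as [|s0 a']; cbn in H.
  - destruct Hk as [-> | ->]; destruct s; discriminate.
  - exists a'. destruct s0, s; try discriminate; injection H as -> <-; auto.
Qed.

Lemma istep_encodes s s' S : istep s s' -> encodes s S -> exists S', lstep S S' /\ encodes s' S'.
Proof.
  destruct S as [Pr D]. intros Hstep. destruct Hstep as [sy a b C C' Hs | sy a b C C' Hs];
    intros [Hp ->]; cbn in Hp.
  - exists ([prefix a LTick; prefix b LZero], C'). split; [|split; reflexivity].
    apply lstep_iff. exists sy, (prefix a LTick), [prefix b LZero], C'. auto.
  - exists ([prefix b LZero; prefix a LTick], C'). split; [|split; [apply perm_swap | reflexivity]].
    apply lstep_iff. exists sy, (prefix b LZero), [prefix a LTick], C'.
    repeat split; auto. rewrite Hp. apply perm_swap.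
Qed.

Lemma lstep_encodes s S S' : encodes s S -> lstep S S' -> exists s', istep s s' /\ encodes s' S'.
Proof.
  destruct s as [[a b] C], S as [Pr D]. intros [Hp ->] Hstep.
  apply lstep_iff in Hstep as (sy & v & R & C' & Hq & Hs & ->).
  assert (Hpair := Permutation_trans (Permutation_sym Hq) Hp).
  apply Permutation_cons_pair_inv in Hpair as [[Hv ->] | [Hv ->]].
  - destruct (prefix_eq_prefix_sym _ _ _ _ (or_introl eq_refl) (eq_sym Hv)) as (a' & -> & ->).
    exists (a', b, C'). split; [constructor; assumption | split; reflexivity].
  - destruct (prefix_eq_prefix_sym _ _ _ _ (or_intror eq_refl) (eq_sym Hv)) as (b' & -> & ->).
    exists (a, b', C'). split; [constructor; assumption | split; [apply perm_swap | reflexivity]].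
Qed.

Lemma isteps_encodes s s' S : isteps s s' -> encodes s S -> exists S', lsteps S S' /\ encodes s' S'.
Proof.
  intros H. revert S. induction H as [s | s s1 s' Hstep _ IH]; intros S Henc.
  - exists S. split; [constructor | assumption].
  - destruct (istep_encodes _ _ _ Hstep Henc) as (S1 & HS1 & Henc1).
    destruct (IH _ Henc1) as (S' & HS' & Henc'). exists S'. split; [econstructor; eauto | assumption].
Qed.

Lemma lsteps_encodes S S' s : lsteps S S' -> encodes s S -> exists s', isteps s s' /\ encodes s' S'.
Proof.
  intros H. revert s. induction H as [S | S S1 S' Hstep _ IH]; intros s Henc.
  - exists s. split; [apply rt1n_refl | assumption].
  - destruct (lstep_encodes _ _ _ Henc Hstep) as (s1 & Hs1 & Henc1).
    destruct (IH _ Henc1) as (s' & Hs' & Henc'). exists s'. split; [econstructor; eauto | assumption].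
Qed.

Lemma encodes_lsuccess a b C S : encodes (a, b, C) S -> (lsuccess S <-> a = []).
Proof.
  destruct S as [Pr D]. intros [Hp _]. unfold lsuccess. cbn. split.
  - intros Htick. apply (Permutation_in _ Hp) in Htick as [H | [H | []]].
    + destruct a as [|[] a]; [reflexivity | discriminate | discriminate].
    + destruct b as [|[] b]; discriminate.
  - intros ->. apply (Permutation_in _ (Permutation_sym Hp)). left. reflexivity.
Qed.

Lemma lmay_iff_may_finish a b C S : encodes (a, b, C) S -> (lmay S <-> may_finish a b C).
Proof.
  intros Henc. split.
  - intros (S' & HS & Hsucc).
    destruct (lsteps_encodes _ _ _ HS Henc) as ([[a' b'] C'] & Hrun & Henc').
    apply (encodes_lsuccess _ _ _ _ Henc') in Hsucc as ->. exists b', C'. exact Hrun.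
  - intros (b' & C' & Hrun).
    destruct (isteps_encodes _ _ _ Hrun Henc) as (S' & HS & Henc').
    exists S'. split; [exact HS | apply (encodes_lsuccess _ _ _ _ Henc'); reflexivity].
Qed.

Lemma lmust_deadlock_free a b C S : encodes (a, b, C) S -> lmust S -> deadlock_free a b C.
Proof.
  intros Henc Hmust [[a' b'] C'] Hrun Hdead.
  destruct (isteps_encodes _ _ _ Hrun Henc) as (S' & HS & Henc').
  apply (deadlocked_not_may_finish _ _ _ Hdead).
  apply (lmay_iff_may_finish _ _ _ _ Henc'), Hmust, HS.
Qed.

(** * Words ending in [P j] *)

Lemma trailing_P_absurd IS x u j y e f o :
  (forall i, IS i = Full) -> x = u ++ [P j] -> stuck_at IS f o -> o <> j ->
  may_finish x y IS ->
  ~ may_finish (y ++ e) x IS ->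
  deadlock_free x (y ++ e) IS ->
  deadlock_free (x ++ f) (y ++ e) IS ->
  False.
Proof.
  intros HIS Hx (f1 & f2 & Cf & -> & Hf1 & Hfo) Hoj (b' & C' & Hrun) Hno_may Hfree Hfree_f.
  subst x. destruct (isteps_through_suffix _ _ _ _ _ _ Hrun) as (b0 & C0 & Hlast).
  apply (isteps_app_right e) in Hlast.
  destruct (exec_some_or_stuck (b0 ++ e) C0) as [(C1 & Hexec) | (k & w1 & w2 & C1 & Hw & Hexec & Hk)].
  - apply Hno_may. exists [P j], C1. apply isteps_swap.
    eapply isteps_trans; [exact Hlast|].
    rewrite <- (app_nil_r (b0 ++ e)) at 1. apply isteps_exec_right, Hexec.
  - rewrite Hw in Hlast.
    assert (Hstuck := isteps_trans _ _ _ Hlast (isteps_exec_right [P j] _ (P k :: w2) _ _ Hexec)).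
    destruct (C1 j) eqn:Hj.
    + assert (Hkj : j <> k) by congruence.
      assert (Hrefilled : upd C1 j Full = IS).
      { apply functional_extensionality. intros i. rewrite HIS.
        destruct (lockid_other _ _ Hkj i) as [-> | ->];
          [apply upd_same | rewrite upd_other; assumption]. }
      assert (Hfired : isteps ((u ++ [P j]) ++ f1 ++ P o :: f2, y ++ e, IS)
                              (f1 ++ P o :: f2, P k :: w2, IS)).
      { rewrite <- Hrefilled at 2. apply (isteps_app_left (f1 ++ P o :: f2)) in Hstuck.
        eapply isteps_trans; [exact Hstuck|].
        eapply rt1n_trans; [constructor; constructor; exact Hj | apply rt1n_refl]. }
      destruct (lockid_other _ _ Hkj o) as [-> | ->]; [contradiction|].
      apply (Hfree_f (P k :: f2, P k :: w2, Cf)).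
      * eapply isteps_trans; [exact Hfired | apply isteps_exec_left, Hf1].
      * split; [|right]; exists k; eauto.
    + apply (Hfree _ Hstuck). split; [|right]; [exists j | exists k]; eauto.
Qed.

(** * Two-component SYNCSIMPLE processes *)

Definition sync (a b : ssub) : option sproc :=
  match a, b with
  | SSnd u, SRcv v | SRcv v, SSnd u => Some [u; v]
  | _, _ => None
  end.

Lemma sstep_pair a b Q : sstep [a; b] Q <-> sync a b = Some Q.
Proof.
  split.
  - intros (U1 & U2 & R & Hp & ->). destruct R; [|apply Permutation_length in Hp; discriminate].
    apply Permutation_length_2_inv in Hp as [H | H]; injection H as <- <-; reflexivity.
  - destruct a, b; cbn; intros H; try discriminate; injection H as <-.
    + exists a, b, []. auto.
    + exists b, a, []. split; [apply perm_swap | reflexivity].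
Qed.

Lemma ssteps_pair_inv a b Q :
  ssteps [a; b] Q -> Q = [a; b] \/ exists Q1, sync a b = Some Q1 /\ ssteps Q1 Q.
Proof.
  intros H. inversion H as [| ? Q1 ? Hstep Hrest]; subst; [now left|].
  right. exists Q1. split; [apply sstep_pair|]; assumption.
Qed.

Lemma smay_sync a b Q : sync a b = Some Q -> smay Q -> smay [a; b].
Proof.
  intros Hsync (Q' & HQ & Hsucc). exists Q'. split; [|exact Hsucc].
  econstructor; [apply sstep_pair, Hsync | exact HQ].
Qed.

Ltac peel_ssteps H :=
  let Hsync := fresh "Hsync" in
  apply ssteps_pair_inv in H as [-> | (? & Hsync & H)];
  [| cbn in Hsync; first [discriminate | injection Hsync as <-; peel_ssteps H]].

Ltac solve_smay :=
  repeat (eapply smay_sync; [reflexivity|]);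
  eexists; split; [apply ssteps_refl | cbn; tauto].

Ltac solve_not_smay :=
  let H := fresh in intros (? & H & ?); peel_ssteps H; cbn in *; intuition discriminate.

Ltac solve_smust := let H := fresh in intros ? H; peel_ssteps H; solve_smay.

Lemma correct_may_finish IS ws wr Pr a b :
  correct_translation IS ws wr -> encodes (a, b, IS) (tr_proc ws wr Pr, IS) ->
  smay Pr -> may_finish a b IS.
Proof. intros Hc Henc H. apply (lmay_iff_may_finish _ _ _ _ Henc), Hc, H. Qed.

Lemma correct_not_may_finish IS ws wr Pr a b :
  correct_translation IS ws wr -> encodes (a, b, IS) (tr_proc ws wr Pr, IS) ->
  ~ smay Pr -> ~ may_finish a b IS.
Proof. intros Hc Henc H Hmay. apply H, Hc, (lmay_iff_may_finish _ _ _ _ Henc), Hmay. Qed.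

Lemma correct_deadlock_free IS ws wr Pr a b :
  correct_translation IS ws wr -> encodes (a, b, IS) (tr_proc ws wr Pr, IS) ->
  smust Pr -> deadlock_free a b IS.
Proof. intros Hc Henc H. apply (lmust_deadlock_free _ _ _ _ Henc), Hc, H. Qed.

Ltac by_translation Hc Pr :=
  first [ apply (correct_may_finish _ _ _ Pr _ _ Hc); [| solve_smay]
        | apply (correct_not_may_finish _ _ _ Pr _ _ Hc); [| solve_not_smay]
        | apply (correct_deadlock_free _ _ _ Pr _ _ Hc); [| solve_smust] ];
  cbn; rewrite ?prefix_app; split; [first [apply Permutation_refl | apply perm_swap] | reflexivity].

Lemma has_T_suffix_or_last_P w : w <> [] -> has_T_suffix w \/ exists u j, w = u ++ [P j].
Proof.
  intros H. destruct (exists_last H) as (u & [j | i] & ->); [right; eauto | left].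
  exists u, [T i]. repeat split; [discriminate | repeat constructor].
Qed.

Lemma send_word_has_T_suffix IS ws wr :
  correct_translation IS ws wr -> (forall i, IS i = Full) ->
  stuck_at IS ws L1 -> stuck_at IS wr L2 -> has_T_suffix ws.
Proof.
  intros Hc HIS Hs Hr.
  destruct (has_T_suffix_or_last_P _ (stuck_at_nonempty _ _ _ Hs)) as [| (u & [] & Hu)];
    [assumption | exfalso | exfalso].
  - apply (trailing_P_absurd IS ws u L1 wr ws wr L2 HIS Hu Hr ltac:(discriminate)).
    + by_translation Hc [SSnd STick; SRcv SZero].
    + by_translation Hc [SSnd SZero; SRcv (SSnd STick)].
    + by_translation Hc [SSnd STick; SRcv (SSnd SZero)].
    + by_translation Hc [SSnd (SRcv STick); SRcv (SSnd SZero)].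
  - apply (trailing_P_absurd IS ws u L2 wr wr ws L1 HIS Hu Hs ltac:(discriminate)).
    + by_translation Hc [SSnd STick; SRcv SZero].
    + by_translation Hc [SSnd SZero; SRcv (SRcv STick)].
    + by_translation Hc [SSnd STick; SRcv (SRcv SZero)].
    + by_translation Hc [SSnd (SSnd STick); SRcv (SRcv SZero)].
Qed.

Lemma receive_word_has_T_suffix IS ws wr :
  correct_translation IS ws wr -> (forall i, IS i = Full) ->
  stuck_at IS ws L1 -> stuck_at IS wr L2 -> has_T_suffix wr.
Proof.
  intros Hc HIS Hs Hr.
  destruct (has_T_suffix_or_last_P _ (stuck_at_nonempty _ _ _ Hr)) as [| (u & [] & Hu)];
    [assumption | exfalso | exfalso].
  - apply (trailing_P_absurd IS wr u L1 ws ws wr L2 HIS Hu Hr ltac:(discriminate)).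
    + by_translation Hc [SSnd SZero; SRcv STick].
    + by_translation Hc [SSnd (SSnd STick); SRcv SZero].
    + by_translation Hc [SSnd (SSnd SZero); SRcv STick].
    + by_translation Hc [SSnd (SSnd SZero); SRcv (SRcv STick)].
  - apply (trailing_P_absurd IS wr u L2 ws wr ws L1 HIS Hu Hs ltac:(discriminate)).
    + by_translation Hc [SSnd SZero; SRcv STick].
    + by_translation Hc [SSnd (SRcv STick); SRcv SZero].
    + by_translation Hc [SSnd (SRcv SZero); SRcv STick].
    + by_translation Hc [SSnd (SRcv SZero); SRcv (SSnd STick)].
Qed.

Theorem corollary5p14 (IS : cells) (ws wr : list lsym) :
  correct_translation IS ws wr ->
  blocking_type_P IS ws L1 ->
  blocking_type_P IS wr L2 ->
  has_T_suffix ws /\ has_T_suffix wr.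
Proof.
  intros Hc Hs Hr.
  assert (HIS : forall i, IS i = Full)
    by (intros []; eapply blocking_type_P_initial_full; eassumption).
  apply blocking_type_P_stuck_at in Hs, Hr.
  split; [exact (send_word_has_T_suffix _ _ _ Hc HIS Hs Hr)
         | exact (receive_word_has_T_suffix _ _ _ Hc HIS Hs Hr)].
Qed.
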